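(* Let $T:V\to\mathfrak g$ be an $\mathcal O$-operator on a Lie algebra $\mathfrak g$ with respect to a representation $(V;\rho)$. Then for every $k\ge0$ and every $f\in\mathrm{Hom}(\wedge^kV,\mathfrak g)$, $d_{\bar\rho}f=(-1)^k[\![T,f]\!]$.
   Context: An $\mathcal O$-operator: linear $T:V\to\mathfrak g$ with $[Tu,Tv]=T(\rho(Tu)(v)-\rho(Tv)(u))$. Set $[u,v]_T=\rho(Tu)(v)-\rho(Tv)(u)$ (a Lie bracket on $V$) and $\bar\rho(u)(x)=[Tu,x]+T\rho(x)(u)$, a representation of $(V,[\cdot,\cdot]_T)$ on $\mathfrak g$. $d_{\bar\rho}:\mathrm{Hom}(\wedge^kV,\mathfrak g)\to\mathrm{Hom}(\wedge^{k+1}V,\mathfrak g)$ is the Chevalley–Eilenberg coboundary: $d_{\bar\rho}f(u_1,\dots,u_{k+1})=\sum_{i}(-1)^{i+1}[Tu_i,f(u_1,\dots,\hat u_i,\dots,u_{k+1})]+\sum_i(-1)^{i+1}T\rho(f(u_1,\dots,\hat u_i,\dots,u_{k+1}))(u_i)+\sum_{i<j}(-1)^{i+j}f([u_i,u_j]_T,u_1,\dots,\hat u_i,\dots,\hat u_j,\dots,u_{k+1})$. The bracket $[\![\cdot,\cdot]\!]$ on $\bigoplus_k\mathrm{Hom}(\wedge^kV,\mathfrak g)$ is $[\![P,Q]\!](u_1,\dots,u_{m+n})=\sum_{\sigma\in\mathbb S_{(m,1,n-1)}}(-1)^{\sigma}P(\rho(Q(u_{\sigma(1)},\dots,u_{\sigma(m)}))u_{\sigma(m+1)},u_{\sigma(m+2)},\dots,u_{\sigma(m+n)})-(-1)^{mn}\sum_{\sigma\in\mathbb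 S_{(n,1,m-1)}}(-1)^{\sigma}Q(\rho(P(u_{\sigma(1)},\dots,u_{\sigma(n)}))u_{\sigma(n+1)},u_{\sigma(n+2)},\dots,u_{\sigma(m+n)})+(-1)^{mn}\sum_{\sigma\in\mathbb S_{(n,m)}}(-1)^{\sigma}[P(u_{\sigma(1)},\dots,u_{\sigma(n)}),Q(u_{\sigma(n+1)},\dots,u_{\sigma(m+n)})]$ for $P\in\mathrm{Hom}(\wedge^nV,\mathfrak g)$, $Q\in\mathrm{Hom}(\wedge^mV,\mathfrak g)$, where $\mathbb S_{(i_1,\dots,i_k)}$ denotes unshuffles (permutations increasing on consecutive blocks of the given sizes). *)

From HB Require Import structures.
From mathcomp Require Import all_boot all_order all_algebra all_fingroup.
Set Implicit Arguments. Unset Strict Implicit. Unset Printing Implicit Defensive.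
Import GRing.Theory.
Local Open Scope ring_scope.

Definition is_lie_bracket (K : fieldType) (g : lmodType K) (br : g -> g -> g) : Prop :=
  [/\ (forall (a : K) x y z, br (a *: x + y) z = a *: br x z + br y z),
      (forall (a : K) x y z, br z (a *: x + y) = a *: br z x + br z y),
      (forall x, br x x = 0) &
      (forall x y z, br x (br y z) + br y (br z x) + br z (br x y) = 0)].

Definition is_rep (K : fieldType) (g V : lmodType K) (br : g -> g -> g)
  (rho : g -> V -> V) : Prop :=
  [/\ (forall (a : K) x u v, rho x (a *: u + v) = a *: rho x u + rho x v),
      (forall (a : K) x y v, rho (a *: x + y) v = a *: rho x v + rho y v) &
      (forall x y v, rho (br x y) v = rho x (rho y v) - rho y (rho x v))].

Definition is_O_operator (K : fieldType) (g V : lmodType K) (br : g -> g -> g)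
  (rho : g -> V -> V) (T : V -> g) : Prop :=
  (forall (a : K) u v, T (a *: u + v) = a *: T u + T v) /\
  (forall u v, br (T u) (T v) = T (rho (T u) v - rho (T v) u)).

Definition bracketT (K : fieldType) (g V : lmodType K) (rho : g -> V -> V)
  (T : V -> g) (u v : V) : V := rho (T u) v - rho (T v) u.

(* Elements of Hom(wedge^k V, g) are represented by f : seq V -> g, of which
   only the values on lists of length k matter; f must be k-linear and alternating. *)
Definition is_cochain (K : fieldType) (g V : lmodType K) (k : nat)
  (f : seq V -> g) : Prop :=
  (forall (u : seq V) (i : nat) (a : K) (x y : V), size u = k -> (i < k)%N ->
     f (set_nth 0 u i (a *: x + y)) = a *: f (set_nth 0 u i x) + f (set_nth 0 u i y)) /\
  (forall (u : seq V) (i j : nat), size u = k -> (i < j)%N -> (j < k)%N ->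
     nth 0 u i = nth 0 u j -> f u = 0).

Definition rem_at (T : Type) (i : nat) (s : seq T) : seq T := take i s ++ drop i.+1 s.

(* Chevalley–Eilenberg coboundary d_{rhobar} f, evaluated at u = (u_1,...,u_{k+1})
   (0-indexed: sign (-1)^{i+1} for 1-indexed i becomes (-1)^i). *)
Definition dcob (K : fieldType) (g V : lmodType K) (br : g -> g -> g)
  (rho : g -> V -> V) (T : V -> g) (k : nat) (f : seq V -> g) (u : seq V) : g :=
  \sum_(i < k.+1) ((-1 : K) ^+ i) *: br (T (nth 0 u i)) (f (rem_at i u))
  + \sum_(i < k.+1) ((-1 : K) ^+ i) *: T (rho (f (rem_at i u)) (nth 0 u i))
  + \sum_(i < k.+1) \sum_(j < k.+1 | (i < j)%N)
      ((-1 : K) ^+ (i + j)) *: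
        f (bracketT rho T (nth 0 u i) (nth 0 u j) :: rem_at i (rem_at j u)).

(* s is an unshuffle of type (bs_1, ..., bs_r): increasing on consecutive blocks *)
Definition unshuffle (N : nat) (bs : seq nat) (s : 'S_N) : bool :=
  (sumn bs == N) && all (sorted ltn) (reshape bs [seq nat_of_ord (s i) | i <- enum 'I_N]).

Definition pargs (V : zmodType) (N : nat) (s : 'S_N) (u : seq V) : seq V :=
  [seq nth 0 u (s i) | i <- enum 'I_N].

(* The bracket [[P,Q]] for P of arity n and Q of arity m, evaluated at
   u = (u_1, ..., u_{m+n}). *)
Definition bigbr (K : fieldType) (g V : lmodType K) (br : g -> g -> g)
  (rho : g -> V -> V) (n m : nat) (P Q : seq V -> g) (u : seq V) : g :=
  \sum_(s : 'S_(m + n) | unshuffle [:: m; 1%N; n.-1] s)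
     ((-1 : K) ^+ odd_perm s) *:
       P (rho (Q (take m (pargs s u))) (nth 0 (pargs s u) m) :: drop m.+1 (pargs s u))
  - ((-1 : K) ^+ (m * n)) *:
    \sum_(s : 'S_(m + n) | unshuffle [:: n; 1%N; m.-1] s)
     ((-1 : K) ^+ odd_perm s) *:
       Q (rho (P (take n (pargs s u))) (nth 0 (pargs s u) n) :: drop n.+1 (pargs s u))
  + ((-1 : K) ^+ (m * n)) *:
    \sum_(s : 'S_(m + n) | unshuffle [:: n; m] s)
     ((-1 : K) ^+ odd_perm s) *: br (P (take n (pargs s u))) (Q (drop n (pargs s u))).

(* T viewed as an element of Hom(wedge^1 V, g) *)
Definition cochain_of (K : fieldType) (g V : lmodType K) (T : V -> g) : seq V -> g :=
  fun l => T (nth 0 l 0).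

From HB Require Import structures.
From mathcomp Require Import all_boot all_order all_algebra all_fingroup.
From mathcomp Require Import zify.
Import GRing.Theory.
Local Open Scope ring_scope.
Set Implicit Arguments. Unset Strict Implicit. Unset Printing Implicit Defensive.

(* The identity is formal: besides the linearity of f in its first argument it
   uses none of the Lie algebra, representation or O-operator axioms. In
   [[T, f]] the (1,k)-unshuffles give the terms [T u_i, f(..)] of d f, the
   (k,1,0)-unshuffles the terms T rho(f(..)) u_i, and the (1,1,k-1)-unshuffles
   the terms f(rho(T u_a) u_b, ..); the latter regroup, pair of positions by pair
   of positions, into the terms f([u_i, u_j]_T, ..) of d f because
   [u_i, u_j]_T = rho(T u_i) u_j - rho(T u_j) u_i. An unshuffle whose blocks of
   size one come first (or last) is an iterated lift_perm of the identity, which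
   turns the sums over permutations into sums over positions. *)

Section RemAt.
Variable T : Type.
Implicit Types (u s : seq T) (x : T).

Lemma nth_rem_at x0 i j u : nth x0 (rem_at i u) j = nth x0 u (bump i j).
Proof.
rewrite /rem_at /bump; case: (ltnP i (size u)) => hi.
  rewrite nth_cat size_take hi; case: (ltnP j i) => hj.
    by rewrite nth_take.
  by rewrite nth_drop addSn subnKC.
rewrite take_oversize // drop_oversize ?cats0; last exact: leq_trans hi _.
case: (leqP i j) => hj //.
by rewrite !nth_default //; lia.
Qed.

Lemma size_rem_at i u : (i < size u)%N -> size (rem_at i u) = (size u).-1.
Proof. by move=> hi; rewrite /rem_at size_cat size_take size_drop hi; lia. Qed.

Lemma rem_at_cons i x s :
  rem_at i (x :: s) = if i is i'.+1 then x :: rem_at i' s else s.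
Proof. by case: i => [|i]; rewrite /rem_at /= ?drop0. Qed.

Lemma rem_atC a b u : (a <= b)%N -> rem_at b (rem_at a u) = rem_at a (rem_at b.+1 u).
Proof.
elim: u a b => [|x s IH] [|a] [|b] hab; rewrite ?rem_at_cons //.
by rewrite IH.
Qed.

Lemma map_nth_rem_at x0 i u (l : seq nat) :
  map (nth x0 u) (map (bump i) l) = map (nth x0 (rem_at i u)) l.
Proof. by rewrite -map_comp; apply: eq_map => j; rewrite /= nth_rem_at. Qed.

Definition rem_at2 i j u := rem_at (minn i j) (rem_at (maxn i j) u).

Lemma rem_at2C i j u : rem_at2 i j u = rem_at2 j i u.
Proof. by rewrite /rem_at2 minnC maxnC. Qed.

Lemma rem_at_rem_at a b u : rem_at b (rem_at a u) = rem_at2 a (bump a b) u.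
Proof.
rewrite /rem_at2 /bump; case: (leqP a b) => hab.
  by rewrite add1n (minn_idPl (leqW hab)) (maxn_idPr (leqW hab)) rem_atC.
by rewrite add0n (minn_idPr (ltnW hab)) (maxn_idPl (ltnW hab)).
Qed.

End RemAt.

Section PermUnlift.
Variable n : nat.
Implicit Types (i j : 'I_n.+1) (s : 'S_n.+1) (t : 'S_n).

Definition perm_unlift_fun i s (k : 'I_n) : 'I_n :=
  odflt k (unlift (s i) (s (lift i k))).

Lemma lift_perm_unlift_fun i s k : lift (s i) (perm_unlift_fun i s k) = s (lift i k).
Proof.
have /unlift_some[k' def_k' unlift_k'] : s i != s (lift i k).
  by rewrite (inj_eq perm_inj) neq_lift.
by rewrite /perm_unlift_fun unlift_k' def_k'.
Qed.

Lemma perm_unlift_fun_inj i s : injective (perm_unlift_fun i s).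
Proof.
move=> k1 k2 /(congr1 (lift (s i))).
by rewrite !lift_perm_unlift_fun => /perm_inj/lift_inj.
Qed.

Definition perm_unlift i s : 'S_n := perm (@perm_unlift_fun_inj i s).

Lemma lift_perm_unlift i s : lift_perm i (s i) (perm_unlift i s) = s.
Proof.
apply/permP => k; case: (unliftP i k) => [k'|] ->; rewrite ?lift_perm_id //.
by rewrite lift_perm_lift permE lift_perm_unlift_fun.
Qed.

Lemma perm_unlift_lift i j t : perm_unlift i (lift_perm i j t) = t.
Proof.
apply/permP => k; apply: (@lift_inj _ j).
by rewrite permE -{1}(lift_perm_id i j t) lift_perm_unlift_fun lift_perm_lift.
Qed.

Lemma big_lift_perm (M : nmodType) i0 (P : pred 'S_n.+1) (F : 'S_n.+1 -> M) :
  \sum_(s | P s) F s =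
  \sum_(j < n.+1) \sum_(t : 'S_n | P (lift_perm i0 j t)) F (lift_perm i0 j t).
Proof.
rewrite (partition_big (fun s => s i0) predT) //=; apply: eq_bigr => j _.
rewrite (reindex (lift_perm i0 j)) /=.
  by apply: eq_bigl => t; rewrite lift_perm_id eqxx andbT.
exists (perm_unlift i0) => [t _ | s /andP[_ /eqP <-]].
  exact: perm_unlift_lift.
exact: lift_perm_unlift.
Qed.

End PermUnlift.

Definition perm_vals N (s : 'S_N) : seq nat := [seq nat_of_ord (s i) | i <- enum 'I_N].

Lemma size_perm_vals N (s : 'S_N) : size (perm_vals s) = N.
Proof. by rewrite size_map size_enum_ord. Qed.

Lemma perm_vals_lift0 n (i : 'I_n.+1) (t : 'S_n) :
  perm_vals (lift_perm ord0 i t) = (i : nat) :: map (bump i) (perm_vals t).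
Proof.
rewrite /perm_vals enum_ordSl /= lift_perm_id -!map_comp; congr (_ :: _).
by apply: eq_map => j /=; rewrite lift_perm_lift.
Qed.

Lemma perm_vals_liftmax n (i : 'I_n.+1) (t : 'S_n) :
  perm_vals (lift_perm ord_max i t) = rcons (map (bump i) (perm_vals t)) (i : nat).
Proof.
rewrite /perm_vals enum_ordSr map_rcons lift_perm_id -!map_comp; congr rcons.
apply: eq_map => j /=.
have -> : widen_ord (leqnSn n) j = lift ord_max j.
  by apply: val_inj; rewrite /= /bump leqNgt ltn_ord.
by rewrite lift_perm_lift.
Qed.

Lemma sorted_perm_vals N (t : 'S_N) : sorted ltn (perm_vals t) = (t == 1%g).
Proof.
apply/idP/eqP => [sorted_t|->]; last first.
  rewrite /perm_vals (eq_map (g := val)) => [|j]; last by rewrite perm1.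
  by rewrite val_enum_ord iota_ltn_sorted.
have vals_t : perm_vals t = iota 0 N.
  apply: (irr_sorted_eq ltn_trans ltnn sorted_t (iota_ltn_sorted 0 N)) => x.
  rewrite mem_iota add0n /=; apply/mapP/idP => [[j _ ->]|lt_xN]; first by [].
  by exists (t^-1 (Ordinal lt_xN))%g; rewrite ?mem_enum ?permKV.
apply/permP => j; apply: val_inj; rewrite perm1.
have := congr1 (nth 0%N ^~ j) vals_t.
by rewrite nth_iota // (nth_map j) ?size_enum_ord // nth_ord_enum.
Qed.

Lemma sorted_map_bump i (l : seq nat) : sorted ltn (map (bump i) l) = sorted ltn l.
Proof. by apply: mono_sorted => x y /=; rewrite !ltnNge leq_bump2. Qed.

Section Pargs.
Variable V : zmodType.
Implicit Types u : seq V.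

Lemma pargsE N (s : 'S_N) u : pargs s u = map (nth 0 u) (perm_vals s).
Proof. by rewrite /pargs /perm_vals -map_comp. Qed.

Lemma pargs_lift0 n (a : 'I_n.+1) (t : 'S_n) u :
  pargs (lift_perm ord0 a t) u = nth 0 u a :: pargs t (rem_at a u).
Proof. by rewrite !pargsE perm_vals_lift0 -map_nth_rem_at. Qed.

Lemma pargs_liftmax n (a : 'I_n.+1) (t : 'S_n) u :
  pargs (lift_perm ord_max a t) u = rcons (pargs t (rem_at a u)) (nth 0 u a).
Proof. by rewrite !pargsE perm_vals_liftmax map_rcons -map_nth_rem_at. Qed.

Lemma pargs1 N u : size u = N -> pargs (1%g : 'S_N) u = u.
Proof.
move=> size_u; rewrite /pargs (eq_map (g := nth 0 u \o val)) => [|j]; last by rewrite /= perm1.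
by rewrite map_comp val_enum_ord -size_u map_nth_iota0 // take_size.
Qed.

End Pargs.

Lemma unshuffleE N bs (s : 'S_N) :
  unshuffle bs s = (sumn bs == N) && all (sorted ltn) (reshape bs (perm_vals s)).
Proof. by []. Qed.

Lemma unshuffle_1k_lift0 k (i : 'I_k.+1) (t : 'S_k) :
  unshuffle [:: 1%N; k] (lift_perm ord0 i t) = (t == 1%g).
Proof.
rewrite unshuffleE perm_vals_lift0 /= addn0 eqxx take0 drop0 /= take_oversize.
  by rewrite sorted_map_bump sorted_perm_vals andbT.
by rewrite size_map size_perm_vals.
Qed.

Lemma unshuffle_k10_liftmax k (i : 'I_k.+1) (t : 'S_k) :
  unshuffle [:: k; 1%N; 0%N] (lift_perm ord_max i t) = (t == 1%g).
Proof.
have size_vals : size (map (bump i) (perm_vals t)) = k.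
  by rewrite size_map size_perm_vals.
rewrite unshuffleE perm_vals_liftmax -cats1 /= addn0 addn1 eqxx.
by rewrite take_size_cat // drop_size_cat //= sorted_map_bump sorted_perm_vals andbT.
Qed.

Lemma unshuffle_11k_lift0 k (a : 'I_k.+2) (b : 'I_k.+1) (t : 'S_k) :
  unshuffle [:: 1%N; 1%N; k] (lift_perm ord0 a (lift_perm ord0 b t)) = (t == 1%g).
Proof.
rewrite unshuffleE !perm_vals_lift0 -(sorted_perm_vals t).
have := size_perm_vals t; move: (perm_vals t) => l size_l.
rewrite /= take0 drop0 /= addn0 eqxx take_oversize ?size_map ?size_l //.
by rewrite !sorted_map_bump andbT.
Qed.

Section UnshuffleSums.
Variables (K : fieldType) (V : zmodType) (M : lmodType K).
Implicit Types (u : seq V) (F : seq V -> M).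

Lemma sum_unshuffle_1k k u F : size u = k.+1 ->
  \sum_(s : 'S_k.+1 | unshuffle [:: 1%N; k] s) (-1 : K) ^+ odd_perm s *: F (pargs s u)
  = \sum_(i < k.+1) (-1 : K) ^+ i *: F (nth 0 u i :: rem_at i u).
Proof.
move=> size_u; rewrite (big_lift_perm ord0); apply: eq_bigr => i _.
rewrite (eq_bigl (pred1 1%g)) => [|t]; last exact: unshuffle_1k_lift0.
rewrite big_pred1_eq odd_lift_perm odd_perm1 addbF signr_odd pargs_lift0 pargs1 //.
by rewrite size_rem_at size_u.
Qed.

Lemma sum_unshuffle_k10 k u F : size u = k.+1 ->
  \sum_(s : 'S_k.+1 | unshuffle [:: k; 1%N; 0%N] s) (-1 : K) ^+ odd_perm s *: F (pargs s u)
  = \sum_(i < k.+1) (-1 : K) ^+ (k + i) *: F (rcons (rem_at i u) (nth 0 u i)).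
Proof.
move=> size_u; rewrite (big_lift_perm ord_max); apply: eq_bigr => i _.
rewrite (eq_bigl (pred1 1%g)) => [|t]; last exact: unshuffle_k10_liftmax.
rewrite big_pred1_eq odd_lift_perm odd_perm1 addbF -oddD signr_odd pargs_liftmax pargs1 //.
by rewrite size_rem_at size_u.
Qed.

Lemma sum_unshuffle_11k k u F : size u = k.+1 ->
  \sum_(s : 'S_k.+1 | unshuffle [:: 1%N; 1%N; k.-1] s) (-1 : K) ^+ odd_perm s *: F (pargs s u)
  = \sum_(a < k.+1) \sum_(b < k) (-1 : K) ^+ (a + b) *:
      F (nth 0 u a :: nth 0 (rem_at a u) b :: rem_at b (rem_at a u)).
Proof.
case: k => [|k] size_u.
  rewrite big_pred0 => [|s]; last by rewrite unshuffleE.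
  by rewrite big1 // => a _; rewrite big_ord0.
rewrite (big_lift_perm ord0); apply: eq_bigr => a _.
rewrite (big_lift_perm ord0); apply: eq_bigr => b _.
rewrite (eq_bigl (pred1 1%g)) => [|t]; last exact: unshuffle_11k_lift0.
rewrite big_pred1_eq !odd_lift_perm odd_perm1 /= addbF -oddD signr_odd.
by rewrite !pargs_lift0 pargs1 // !size_rem_at ?size_u // size_rem_at size_u.
Qed.

End UnshuffleSums.

Lemma sum_bump_pairs (R : pzRingType) (M : lmodType R) n (G : nat -> nat -> M) :
  \sum_(a < n.+1) \sum_(b < n) (-1 : R) ^+ (a + b) *: G a (bump a b) =
  \sum_(i < n.+1) \sum_(j < n.+1 | (i < j)%N) (-1 : R) ^+ (i + j) *: (G j i - G i j).
Proof.
(* c := bump a b runs over the c != a, and (-1)^(a+b) = -(-1)^(a+c) iff a < c. *)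
pose w (a c : nat) := (-1 : R) ^+ (a + c) *: G a c.
have split_bump (a : 'I_n.+1) : \sum_(b < n) (-1 : R) ^+ (a + b) *: G a (bump a b) =
    \sum_(c < n.+1 | (c < a)%N) w a c - \sum_(c < n.+1 | (a < c)%N) w a c.
  transitivity (\sum_(c < n.+1) if (c < a)%N then w a c else if (a < c)%N then - w a c else 0).
    rewrite (bigD1_ord a) //= ltnn add0r; apply: eq_bigr => b _.
    rewrite /w /= /bump; case: (leqP a b) => [le_ab | lt_ba]; last by rewrite lt_ba.
    by rewrite add1n ltnNge (leqW le_ab) ltnS le_ab addnS exprS mulN1r scaleNr opprK.
  rewrite [X in X - _]big_mkcond [X in _ - X]big_mkcond -sumrB.
  by apply: eq_bigr => c _; case: ltngtP; rewrite ?subr0 ?sub0r.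
under eq_bigr do rewrite split_bump.
under [RHS]eq_bigr do under eq_bigr do rewrite scalerBr.
under [RHS]eq_bigr do rewrite sumrB.
rewrite !sumrB; congr (_ - _).
under eq_bigr do rewrite big_mkcond.
rewrite exchange_big; apply: eq_bigr => i _; rewrite [RHS]big_mkcond.
by apply: eq_bigr => j _; rewrite /w addnC.
Qed.

Lemma cochainB_head (K : fieldType) (g V : lmodType K) k (f : seq V -> g) x y r :
  is_cochain k f -> (size r).+1 = k -> f (x - y :: r) = f (x :: r) - f (y :: r).
Proof.
move=> [f_linear _] size_r.
have k_gt0 : (0 < k)%N by rewrite -size_r.
have := f_linear (0 :: r) 0%N (-1) y x size_r k_gt0.
by rewrite /= !scaleN1r addrC => ->; rewrite addrC.
Qed.

Lemma bigbr_arity1E (K : fieldType) (g V : lmodType K) (br : g -> g -> g)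
    (rho : g -> V -> V) k (P Q : seq V -> g) u :
  size u = k.+1 ->
  bigbr br rho 1 k P Q u =
    (-1 : K) ^+ k *: \sum_(i < k.+1) (-1 : K) ^+ i *: P [:: rho (Q (rem_at i u)) (nth 0 u i)]
  - (-1 : K) ^+ k *: \sum_(a < k.+1) \sum_(b < k) (-1 : K) ^+ (a + b) *:
      Q (rho (P [:: nth 0 u a]) (nth 0 (rem_at a u) b) :: rem_at b (rem_at a u))
  + (-1 : K) ^+ k *: \sum_(i < k.+1) (-1 : K) ^+ i *: br (P [:: nth 0 u i]) (Q (rem_at i u)).
Proof.
move=> size_u; rewrite /bigbr muln1.
(* 'S_(k + 1) is not convertible to 'S_k.+1. *)
have succ_k : k.+1 = (k + 1)%N by rewrite addn1.
case: (k + 1)%N / succ_k.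
have size_rem (i : 'I_k.+1) : size (rem_at i u) = k by rewrite size_rem_at size_u.
rewrite (@sum_unshuffle_k10 _ _ _ _ _
  (fun L => P (rho (Q (take k L)) (nth 0 L k) :: drop k.+1 L))) //.
rewrite (@sum_unshuffle_11k _ _ _ _ _
  (fun L => Q (rho (P (take 1 L)) (nth 0 L 1) :: drop 2 L))) //.
rewrite (@sum_unshuffle_1k _ _ _ _ _ (fun L => br (P (take 1 L)) (Q (drop 1 L)))) //=.
congr (_ - _ + _).
- rewrite scaler_sumr; apply: eq_bigr => i _; rewrite exprD -scalerA.
  rewrite -cats1 (take_size_cat _ (size_rem i)) nth_cat size_rem ltnn subnn.
  by rewrite drop_oversize // size_cat size_rem addn1.
- by congr (_ *: _); apply: eq_bigr => a _; apply: eq_bigr => b _; rewrite drop0.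
- by congr (_ *: _); apply: eq_bigr => i _; rewrite take0 drop0.
Qed.

Lemma sum_bracketT_terms (K : fieldType) (g V : lmodType K) (rho : g -> V -> V)
    (T : V -> g) k (f : seq V -> g) u :
  is_cochain k f -> size u = k.+1 ->
  \sum_(i < k.+1) \sum_(j < k.+1 | (i < j)%N) (-1 : K) ^+ (i + j) *:
    f (bracketT rho T (nth 0 u i) (nth 0 u j) :: rem_at i (rem_at j u))
  = - \sum_(a < k.+1) \sum_(b < k) (-1 : K) ^+ (a + b) *:
      f (rho (T (nth 0 u a)) (nth 0 (rem_at a u) b) :: rem_at b (rem_at a u)).
Proof.
move=> f_cochain size_u.
pose G a c := f (rho (T (nth 0 u a)) (nth 0 u c) :: rem_at2 a c u).
under [in RHS]eq_bigr do under eq_bigr do rewrite nth_rem_at rem_at_rem_at.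
rewrite (sum_bump_pairs _ G) -sumrN; apply: eq_bigr => i _.
rewrite -sumrN; apply: eq_bigr => j lt_ij.
have rem_ij : rem_at i (rem_at j u) = rem_at2 i j u.
  by rewrite /rem_at2 (minn_idPl (ltnW lt_ij)) (maxn_idPr (ltnW lt_ij)).
rewrite /G rem_at2C rem_ij /bracketT (cochainB_head _ _ f_cochain) ?scalerBr ?opprB //.
by rewrite !size_rem_at ?size_u //=; move: (ltn_ord j) lt_ij; lia.
Qed.

Theorem proposition3p3 (K : fieldType) (g V : lmodType K) (br : g -> g -> g)
  (rho : g -> V -> V) (T : V -> g) :
  is_lie_bracket br -> is_rep br rho -> is_O_operator br rho T ->
  forall (k : nat) (f : seq V -> g), is_cochain k f ->
  forall u : seq V, size u = k.+1 ->
    dcob br rho T k f u = ((-1 : K) ^+ k) *: bigbr br rho 1%N k (cochain_of T) f u.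
Proof.
move=> _ _ _ k f f_cochain u size_u.
rewrite /dcob bigbr_arity1E // sum_bracketT_terms // /cochain_of /=.
rewrite scalerDr scalerBr !signrZK.
by rewrite [RHS]addrAC [X in X - _ = _]addrC.
Qed.
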